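(* Let $d,m,p,n\ge 1$ and let $\{g_{ij}:1\le i\le m,1\le j\le p\}$ be fixed functions $\mathbb{R}^d\to\mathbb{R}$. Fix $\mathbf{X}=[\mathbf{x}_1,\dots,\mathbf{x}_n]^\top\in\mathbb{R}^{n\times d}$. Let $0<v\le 2$ and $r,s>0$ with $1/r+1/s=1$, and let $b_{m,p,n},c_{m,p,n}>0$. Let $\mathcal{F}$ be the class of maps $\boldsymbol{\Psi}=(\psi_1,\dots,\psi_m):\mathbb{R}^d\to\mathbb{R}^m$ of the form $\psi_i(\mathbf{x})=\sum_{j=1}^p\beta_{ij}g_{ij}(\mathbf{x})$ with coefficient matrix $\mathbf{B}=(\beta_{ij})\in\mathbb{R}^{m\times p}$ satisfying $\|\mathbf{B}\|_r=(\sum_{i,j}|\beta_{ij}|^r)^{1/r}\le b_{m,p,n}$, and assume $\|\mathbf{G}(\mathbf{X})\|_{v,s}\le c_{m,p,n}$, where $\mathbf{G}(\mathbf{X})=(g_{ij}(\mathbf{x}_k))\in\mathbb{R}^{m\times p\times n}$ and $\|\mathbf{G}(\mathbf{X})\|_{v,s}=\big\{\sum_{i=1}^m\sum_{j=1}^p\big(\sum_{k=1}^n|g_{ij}(\mathbf{x}_k)|^v\big)^{s/v}\big\}^{1/s}$. Then for every $\epsilon>0$, $$\log\mathcal{N}\big(\{\boldsymbol{\Psi}(\mathbf{X})\in\mathbb{R}^{n\times m}:\boldsymbol{\Psi}\in\mathcal{F}\},\epsilon,\|\cdot\|_2\big)\le \frac{b_{m,p,n}^2c_{m,p,n}^2}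{\epsilon^2}\log(2mp).$$
   Context: $\boldsymbol{\Psi}(\mathbf{X})=[\boldsymbol{\Psi}(\mathbf{x}_1),\dots,\boldsymbol{\Psi}(\mathbf{x}_n)]^\top$. $\|A\|_2$ denotes the Frobenius norm of a matrix $A$. Proper covering number: $\mathcal{N}(\mathcal{U},\epsilon,\|\cdot\|)$ is the smallest cardinality of a subset $\mathcal{V}\subseteq\mathcal{U}$ such that every $u\in\mathcal{U}$ has some $v\in\mathcal{V}$ with $\|u-v\|\le\epsilon$. *)

From mathcomp Require Import all_boot all_order all_algebra.
From mathcomp Require Import all_classical all_reals all_analysis.
Set Implicit Arguments. Unset Strict Implicit. Unset Printing Implicit Defensive.
Import Order.TTheory GRing.Theory Num.Theory.
Local Open Scope ring_scope.
Local Open Scope classical_set_scope.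

Definition frob {R : realType} {n m : nat} (A : 'M[R]_(n, m)) : R :=
  Num.sqrt (\sum_(k < n) \sum_(i < m) A k i ^+ 2).

Definition entry_rnorm {R : realType} {m p : nat} (r : R) (B : 'M[R]_(m, p)) : R :=
  (\sum_(i < m) \sum_(j < p) `|B i j| `^ r) `^ r^-1.

Definition G_norm {R : realType} {d m p n : nat} (v s : R)
  (g : 'I_m -> 'I_p -> 'rV[R]_d -> R) (X : 'M[R]_(n, d)) : R :=
  (\sum_(i < m) \sum_(j < p)
      (\sum_(k < n) `|g i j (row k X)| `^ v) `^ (s / v)) `^ s^-1.

Definition PsiX {R : realType} {d m p n : nat}
  (g : 'I_m -> 'I_p -> 'rV[R]_d -> R) (B : 'M[R]_(m, p)) (X : 'M[R]_(n, d))
  : 'M[R]_(n, m) :=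
  \matrix_(k < n, i < m) \sum_(j < p) B i j * g i j (row k X).

Definition is_proper_cover {R : realType} {n m : nat}
  (U : set 'M[R]_(n, m)) (eps : R) (V : seq 'M[R]_(n, m)) : Prop :=
  uniq V /\ (forall v, v \in V -> U v) /\
  (forall u, U u -> exists2 v, v \in V & frob (u - v) <= eps).

Definition is_covering_number {R : realType} {n m : nat}
  (U : set 'M[R]_(n, m)) (eps : R) (N : nat) : Prop :=
  (exists V, is_proper_cover U eps V /\ size V = N) /\
  (forall V, is_proper_cover U eps V -> (N <= size V)%N).

(* Maurey's empirical method.  With T = b c, every Psi(X) with ||B||_r <= b is
   a convex combination of the 2mp matrices +-(T / ||A_ij||) A_ij, where A_ij
   carries the column (g_ij(x_k))_k: indeed sum |beta_ij| ||A_ij|| <= b c by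
   Hoelder's inequality, ||A_ij|| being an l2-norm, hence at most the l_v-norm
   for v <= 2.  A greedy choice of K = floor(T^2 / eps^2) vertices (the
   deterministic form of sampling them with the convex weights) brings their
   normalised sum within squared distance T^2 / (K + 1) < eps^2 of any point of
   the hull, so at most (2mp)^K such averages form an eps-cover.  The class is
   convex, so replacing each average by a nearly closest point of the class
   makes the cover proper within the strict slack. *)

From mathcomp Require Import all_boot all_order all_algebra.
From mathcomp Require Import all_classical all_reals all_analysis.
From mathcomp Require Import ring lra.
Import Order.TTheory GRing.Theory Num.Theory.
Local Open Scope ring_scope.
Local Open Scope classical_set_scope.
Local Open Scope convex_scope.
Set Implicit Arguments. Unset Strict Implicit. Unset Printing Implicit Defensive.

Section FrobeniusSquare.
Variables (R : realType) (n m : nat).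
Implicit Types (A B : 'M[R]_(n, m)).

Definition frob2 A := \sum_(k < n) \sum_(i < m) A k i ^+ 2.
Definition mxdot A B := \sum_(k < n) \sum_(i < m) A k i * B k i.

Lemma frob2_ge0 A : 0 <= frob2 A.
Proof. by apply: sumr_ge0 => k _; apply: sumr_ge0 => i _; exact: sqr_ge0. Qed.

Lemma sqr_frob A : frob A ^+ 2 = frob2 A.
Proof. by rewrite sqr_sqrtr // frob2_ge0. Qed.

Lemma frob_le A (e : R) : 0 <= e -> frob2 A <= e ^+ 2 -> frob A <= e.
Proof. by move=> e0 hA; rewrite -(ger0_norm e0) -sqrtr_sqr ler_sqrt // sqr_ge0. Qed.

Lemma frob2_eq0 A : frob2 A = 0 -> A = 0.
Proof.
have sq_ge0 (k : 'I_n) (i : 'I_m) : 0 <= A k i ^+ 2 by exact: sqr_ge0.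
move=> /psumr_eq0P A0; apply/matrixP => k i; rewrite mxE.
have /psumr_eq0P Ak0 := A0 (fun k _ => sumr_ge0 _ (fun i _ => sq_ge0 k i)) k isT.
by apply/eqP; rewrite -sqrf_eq0 Ak0.
Qed.

Lemma frob2N A : frob2 (- A) = frob2 A.
Proof. by apply: eq_bigr => k _; apply: eq_bigr => i _; rewrite mxE sqrrN. Qed.

Lemma frob2Z (t : R) A : frob2 (t *: A) = t ^+ 2 * frob2 A.
Proof.
rewrite /frob2 mulr_sumr; apply: eq_bigr => k _; rewrite mulr_sumr.
by apply: eq_bigr => i _; rewrite mxE exprMn.
Qed.

Lemma mxdotC A B : mxdot A B = mxdot B A.
Proof. by apply: eq_bigr => k _; apply: eq_bigr => i _; rewrite mulrC. Qed.

Lemma mxdotZ A (t : R) B : mxdot A (t *: B) = t * mxdot A B.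
Proof.
rewrite /mxdot mulr_sumr; apply: eq_bigr => k _; rewrite mulr_sumr.
by apply: eq_bigr => i _; rewrite mxE mulrCA.
Qed.

Lemma mxdotN A B : mxdot A (- B) = - mxdot A B.
Proof. by rewrite -scaleN1r mxdotZ mulN1r. Qed.

Lemma mxdot_sumr A (I : finType) (F : I -> 'M[R]_(n, m)) :
  mxdot A (\sum_s F s) = \sum_s mxdot A (F s).
Proof.
symmetry; rewrite exchange_big; apply: eq_bigr => k _; rewrite exchange_big.
by apply: eq_bigr => i _; rewrite summxE mulr_sumr.
Qed.

Lemma frob2D A B : frob2 (A + B) = frob2 A + 2 * mxdot A B + frob2 B.
Proof.
rewrite /frob2 /mxdot mulr_sumr -!big_split; apply: eq_bigr => k _.
rewrite mulr_sumr -!big_split; apply: eq_bigr => i _.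
by rewrite mxE /=; ring.
Qed.

Lemma frob2B_le A B : frob2 (A - B) <= 2 * frob2 A + 2 * frob2 B.
Proof.
have := frob2_ge0 (A + B); rewrite frob2D frob2D frob2N mxdotN; lra.
Qed.

End FrobeniusSquare.

Definition in_hull (R : numDomainType) (M : lmodType R) (S : finType)
    (V : S -> M) (x : M) :=
  exists lam : S -> R,
    [/\ forall s, 0 <= lam s, \sum_s lam s = 1 & \sum_s lam s *: V s = x].

Lemma exists_le_mean (R : realType) (S : finType) (lam F : S -> R) (C : R) :
  (forall s, 0 <= lam s) -> \sum_s lam s = 1 -> \sum_s lam s * F s <= C ->
  exists s, F s <= C.
Proof.
move=> lam_ge0 lam_sum1 meanC; apply/not_existsP => notCF.
have CF s : C < F s by rewrite ltNge; apply/negP; exact: notCF.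
suff : C < \sum_s lam s * F s by rewrite ltNge meanC.
have [s0 lam_s0] : exists s, 0 < lam s.
  apply/not_existsP => not_lam_gt0.
  have lam_le0 s : lam s <= 0 by rewrite leNgt; apply/negP; exact: not_lam_gt0.
  suff : \sum_s lam s = 0 by rewrite lam_sum1 => /eqP; rewrite oner_eq0.
  by apply: big1 => s _; apply/eqP; rewrite eq_le lam_le0 lam_ge0.
rewrite -subr_gt0 -[C]mul1r -lam_sum1 mulr_suml -sumrB (bigD1 s0) //=.
apply: ltr_pwDl; first by rewrite -mulrBr mulr_gt0 // subr_gt0.
by apply: sumr_ge0 => s _; rewrite -mulrBr mulr_ge0 // subr_ge0 ltW.
Qed.

Section Maurey.
Variables (R : realType) (n m : nat) (S : finType) (V : S -> 'M[R]_(n, m)).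
Variable lam : S -> R.
Hypotheses (lam_ge0 : forall s, 0 <= lam s) (lam_sum1 : \sum_s lam s = 1).

Lemma mean_frob2D (E : 'M[R]_(n, m)) (W : S -> 'M[R]_(n, m)) :
  \sum_s lam s *: W s = 0 ->
  \sum_s lam s * frob2 (E + W s) = frob2 E + \sum_s lam s * frob2 (W s).
Proof.
move=> W0; under eq_bigr do rewrite frob2D !mulrDr.
rewrite !big_split /= -mulr_suml lam_sum1 mul1r.
suff -> : \sum_s lam s * (2 * mxdot E (W s)) = 0 by rewrite addr0.
under eq_bigr do rewrite mulrCA -mxdotZ.
by rewrite -mulr_sumr -mxdot_sumr W0 -(scale0r 0) mxdotZ !mul0r mulr0.
Qed.

Lemma mean_frob2_dev (x : 'M[R]_(n, m)) : \sum_s lam s *: V s = x ->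
  \sum_s lam s * frob2 (x - V s) = \sum_s lam s * frob2 (V s) - frob2 x.
Proof.
move=> Vx; have W0 : \sum_s lam s *: (V s - x) = 0.
  by under eq_bigr do rewrite scalerBr; rewrite sumrB -scaler_suml lam_sum1 scale1r Vx subrr.
have := mean_frob2D x W0; under eq_bigr do rewrite addrC subrK.
move=> ->; rewrite addrAC subrr add0r.
by apply: eq_bigr => s _; rewrite -frob2N opprB.
Qed.

Lemma maurey_greedy (x : 'M[R]_(n, m)) (k : nat) : \sum_s lam s *: V s = x ->
  exists sq : seq S, size sq = k /\
    frob2 (k.+1%:R *: x - \sum_(s <- sq) V s)
      <= frob2 x + k%:R * \sum_s lam s * frob2 (x - V s).
Proof.
move=> Vx; elim: k => [|k [sq [size_sq sq_le]]].
  by exists [::]; rewrite big_nil subr0 scale1r mul0r addr0.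
set E := k.+1%:R *: x - \sum_(s <- sq) V s.
have W0 : \sum_s lam s *: (x - V s) = 0.
  by under eq_bigr do rewrite scalerBr; rewrite sumrB -scaler_suml lam_sum1 scale1r Vx subrr.
have [s Es_le] : exists s,
    frob2 (E + (x - V s)) <= frob2 E + \sum_s lam s * frob2 (x - V s).
  apply: (@exists_le_mean _ _ lam (fun s => frob2 (E + (x - V s)))) => //.
  by rewrite (mean_frob2D E W0).
exists (s :: sq); split; first by rewrite /= size_sq.
have -> : k.+2%:R *: x - \sum_(j <- s :: sq) V j = E + (x - V s).
  by rewrite big_cons /E (mulrSr _ k.+1) scalerDl scale1r opprD [- V s + _]addrC addrACA.
by apply: (le_trans Es_le); rewrite (mulrSr _ k) mulrDl mul1r addrA lerD2r.
Qed.

End Maurey.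

Section HullApproximation.
Variables (R : realType) (n m : nat) (S : finType) (V : S -> 'M[R]_(n, m)) (T : R).
Hypothesis V_le : forall s, frob2 (V s) <= T ^+ 2.

Lemma mean_frob2_le (lam : S -> R) : (forall s, 0 <= lam s) -> \sum_s lam s = 1 ->
  \sum_s lam s * frob2 (V s) <= T ^+ 2.
Proof.
move=> lam_ge0 lam_sum1; rewrite -[T ^+ 2]mul1r -lam_sum1 mulr_suml.
by apply: ler_sum => s _; rewrite ler_wpM2l.
Qed.

Lemma frob2_hull_le x : in_hull V x -> frob2 x <= T ^+ 2.
Proof.
move=> [lam [lam_ge0 lam_sum1 Vx]].
have dev_ge0 : 0 <= \sum_s lam s * frob2 (x - V s).
  by apply: sumr_ge0 => s _; rewrite mulr_ge0 // frob2_ge0.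
rewrite mean_frob2_dev // subr_ge0 in dev_ge0.
exact: le_trans dev_ge0 (mean_frob2_le lam_ge0 lam_sum1).
Qed.

(* Only k vertices are averaged but the sum is divided by k + 1: this gives
   the bound T^2 / (k + 1) uniformly in k, including k = 0. *)
Lemma maurey_centroid x k : in_hull V x ->
  exists f : {ffun 'I_k -> S},
    frob2 (x - k.+1%:R^-1 *: \sum_(l < k) V (f l)) <= T ^+ 2 / k.+1%:R.
Proof.
move=> hx; have x_le := frob2_hull_le hx.
case: hx => lam [lam_ge0 lam_sum1 Vx].
have [sq [/eqP size_sq sq_le]] := maurey_greedy lam_ge0 lam_sum1 k Vx.
pose t : k.-tuple S := Tuple size_sq.
exists [ffun l => tnth t l].
have k1_gt0 : 0 < k.+1%:R :> R by rewrite ltr0n.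
have -> : x - k.+1%:R^-1 *: \sum_(l < k) V ([ffun l => tnth t l] l) =
          k.+1%:R^-1 *: (k.+1%:R *: x - \sum_(s <- sq) V s).
  rewrite scalerBr scalerA mulVf ?gt_eqF // scale1r (big_tuple _ _ t).
  by under eq_bigr do rewrite ffunE.
rewrite frob2Z exprVn mulrC ler_pdivrMr ?exprn_gt0 //.
have -> : T ^+ 2 / k.+1%:R * k.+1%:R ^+ 2 = k.+1%:R * T ^+ 2.
  by field; rewrite gt_eqF.
apply: le_trans sq_le _; rewrite mean_frob2_dev //.
have V_mean_le := mean_frob2_le lam_ge0 lam_sum1.
have := frob2_ge0 x; have : 0 <= k%:R :> R by []; rewrite -natr1; nra.
Qed.

End HullApproximation.

Section ApproximateProjection.
Variables (R : realType) (n m : nat) (U : set 'M[R]_(n, m)) (D : R).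
Hypotheses (U_convex : convex_set U) (U_bounded : forall u, U u -> frob2 u <= D).

(* q nearly minimises the distance to c over U; testing this against the
   points of the segments from q to the x in U makes the angle at q between
   c and x almost obtuse. *)
Lemma approx_projection (c : 'M[R]_(n, m)) (eta : R) : U !=set0 -> 0 < eta ->
  exists2 q, U q & forall x, U x -> frob2 (x - q) <= frob2 (x - c) + eta.
Proof.
move=> [u0 Uu0] eta_gt0.
have D_ge0 : 0 <= D by apply: le_trans (frob2_ge0 u0) (U_bounded Uu0).
set E := [set frob2 (c - u) | u in U].
have E_inf : has_inf E.
  by split; [exists (frob2 (c - u0)), u0 | exists 0 => _ [u _ <-]; exact: frob2_ge0].
set th := eta / (8 * D + eta).
have den_gt0 : 0 < 8 * D + eta by lra.
have th_gt0 : 0 < th by rewrite divr_gt0.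
have th_eta : th * (8 * D + eta) = eta by rewrite /th mulfVK // gt_eqF.
have th_le1 : th <= 1 by rewrite /th ler_pdivrMr // mul1r; lra.
set de := th * eta / 2.
have de_gt0 : 0 < de by rewrite /de divr_gt0 // mulr_gt0.
have [_ [q Uq <-] q_near] := inf_adherent de_gt0 E_inf.
exists q => // x Ux.
set A := c - q; set B := x - q.
have seg_ge : frob2 A - de < frob2 (A + (- th) *: B).
  suff : inf E <= frob2 (A + (- th) *: B) by lra.
  apply: ge_inf; first by case: E_inf.
  exists (th *: x + (1 - th) *: q); last first.
    by rewrite scaleNr scalerBl scale1r /A /B scalerBr !opprD !opprK !addrA [c - _ - _]addrAC.
  exact: set_mem (U_convex (Itv01 (ltW th_gt0) th_le1) (mem_set Ux) (mem_set Uq)).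
have B_le : frob2 B <= 4 * D.
  by have := frob2B_le x q; have := U_bounded Ux; have := U_bounded Uq; lra.
have seg_eq : frob2 (A + (- th) *: B) = frob2 A - 2 * th * mxdot A B + th ^+ 2 * frob2 B.
  by rewrite frob2D frob2Z mxdotZ sqrrN; ring.
have dist_eq : frob2 (x - c) = frob2 B - 2 * mxdot A B + frob2 A.
  have -> : x - c = B + - A by rewrite opprB addrA subrK.
  by rewrite frob2D frob2N mxdotN mxdotC; ring.
have dot_lt : th * (2 * mxdot A B) < th * (th * frob2 B + eta / 2).
  by move: seg_ge; rewrite seg_eq /de; lra.
rewrite ltr_pM2l // in dot_lt.
have : th * frob2 B <= th * (4 * D) by rewrite ler_pM2l.
have th_expand : th * (8 * D + eta) = 8 * (th * D) + th * eta by ring.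
have : 0 <= th * eta by rewrite mulr_ge0 // ltW.
rewrite dist_eq; have := frob2_ge0 A; lra.
Qed.

End ApproximateProjection.

Section PowerSums.
Variable R : realType.

Lemma powRV_le (y b t : R) : 0 <= y -> 0 <= b -> 0 < t ->
  (y `^ t^-1 <= b) = (y <= b `^ t).
Proof.
move=> y0 b0 t0; have tV_gt0 : 0 < t^-1 by rewrite invr_gt0.
have powRVK (z : R) : 0 <= z -> (z `^ t^-1) `^ t = z.
  by move=> z0; rewrite -powRrM mulVf ?gt_eqF // powRr1.
have powRKV (z : R) : 0 <= z -> (z `^ t) `^ t^-1 = z.
  by move=> z0; rewrite -powRrM mulfV ?gt_eqF // powRr1.
apply/idP/idP => yb.
  by rewrite -(powRVK y y0) (ge0_ler_powR (ltW t0)) ?nnegrE ?powR_ge0.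
by rewrite -(powRKV b b0) (ge0_ler_powR (ltW tV_gt0)) ?nnegrE ?powR_ge0.
Qed.

Lemma powR_divr (a b r : R) : 0 <= a -> 0 <= b -> (a / b) `^ r = a `^ r / b `^ r.
Proof.
by move=> a0 b0; rewrite powRM ?invr_ge0 // -powR_inv1 // -powRrM mulN1r powRN.
Qed.

Lemma hoelder_sum (I : finType) (a b : I -> R) (r s A B : R) :
  0 < r -> 0 < s -> r^-1 + s^-1 = 1 -> 0 < A -> 0 < B ->
  (forall i, 0 <= a i) -> (forall i, 0 <= b i) ->
  \sum_i a i `^ r <= A `^ r -> \sum_i b i `^ s <= B `^ s ->
  \sum_i a i * b i <= A * B.
Proof.
move=> r0 s0 rs A0 B0 a0 b0 aA bB.
have Ar_gt0 : 0 < A `^ r by rewrite powR_gt0.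
have Bs_gt0 : 0 < B `^ s by rewrite powR_gt0.
have -> : \sum_i a i * b i = A * B * \sum_i (a i / A) * (b i / B).
  by rewrite mulr_sumr; apply: eq_bigr => i _; field; rewrite !gt_eqF.
rewrite -[leRHS]mulr1 ler_pM2l ?mulr_gt0 //.
apply: (@le_trans _ _ (\sum_i ((a i / A) `^ r / r + (b i / B) `^ s / s))).
  by apply: ler_sum => i _; apply: conjugate_powR; rewrite ?divr_ge0 // ltW.
have mean_le (c : I -> R) (C t : R) : 0 < C -> 0 < t -> (forall i, 0 <= c i) ->
    \sum_i c i `^ t <= C `^ t -> \sum_i (c i / C) `^ t / t <= t^-1.
  move=> C0 t0 c0 cC; rewrite -mulr_suml -[leRHS]mul1r ler_pM2r ?invr_gt0 //.
  under eq_bigr => i _ do rewrite powR_divr ?(c0 i) ?(ltW C0) //.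
  by rewrite -mulr_suml ler_pdivrMr ?powR_gt0 // mul1r.
by rewrite big_split /= -rs lerD // mean_le.
Qed.

Lemma sum_sqr_le_lpnorm (I : finType) (F : I -> R) (v : R) : 0 < v -> v <= 2 ->
  \sum_i F i ^+ 2 <= ((\sum_i `|F i| `^ v) `^ v^-1) ^+ 2.
Proof.
move=> v0 v2; set S := \sum_i `|F i| `^ v.
have S_ge0 : 0 <= S by apply: sumr_ge0 => i _; exact: powR_ge0.
have [S0|S_neq0] := eqVneq S 0.
  rewrite big1 ?sqr_ge0 // => i _.
  have /psumr_eq0P := S0; move=> /(_ (fun i _ => powR_ge0 _ _) i isT).
  by move/powR_eq0_eq0/normr0_eq0 ->; rewrite expr0n.
have S_gt0 : 0 < S by rewrite lt_def S_neq0.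
set N := S `^ v^-1.
have N_gt0 : 0 < N by rewrite powR_gt0.
have NvS : N `^ v = S by rewrite -powRrM mulVf ?gt_eqF // powRr1.
have F_le_N i : `|F i| <= N.
  have -> : `|F i| = (`|F i| `^ v) `^ v^-1 by rewrite -powRrM mulfV ?gt_eqF // powRr1.
  rewrite (powRV_le (powR_ge0 _ _) (ltW N_gt0) v0) NvS /S (bigD1 i) //= lerDl.
  by apply: sumr_ge0 => j _; exact: powR_ge0.
have sqr_split (a : R) : 0 <= a -> a ^+ 2 = a `^ v * a `^ (2 - v).
  move=> a0; rewrite -powRD; last by rewrite subrKC pnatr_eq0.
  by rewrite subrKC -[2]/(2%:R) powR_mulrn.
rewrite -/N (sqr_split _ (ltW N_gt0)) NvS mulr_suml; apply: ler_sum => i _.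
rewrite -(real_normK (num_real (F i))) sqr_split // ler_wpM2l ?powR_ge0 //.
apply: (ge0_ler_powR _ _ _ (F_le_N i)); rewrite ?nnegrE ?subr_ge0 //.
exact: ltW.
Qed.

Lemma powR_conv (x y r : R) (t : {i01 R}) : 1 <= r -> 0 <= x -> 0 <= y ->
  (t%:num * x + (1 - t%:num) * y) `^ r <= t%:num * x `^ r + (1 - t%:num) * y `^ r.
Proof. by move=> r1 x0 y0; apply: (convex_powR r1 t); rewrite inE /= in_itv /= andbT. Qed.

End PowerSums.

Lemma sum_pair (V : nmodType) (I J : finType) (F : I * J -> V) :
  \sum_x F x = \sum_i \sum_j F (i, j).
Proof. by rewrite pair_bigA; apply: eq_bigr => -[]. Qed.

Lemma in_hull_signed (R : realFieldType) (M : lmodType R) (I : finType) (i0 : I)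
    (W : I -> M) (a : I -> R) :
  \sum_i `|a i| <= 1 ->
  in_hull (fun x : I * bool => (-1) ^+ x.2 *: W x.1) (\sum_i a i *: W i).
Proof.
move=> a_le1; set L := \sum_i `|a i|.
(* the slack 1 - L goes in equal halves to the vertices +W i0 and -W i0 *)
pose lam (x : I * bool) :=
  (x.2 == (a x.1 < 0))%:R * `|a x.1| + (x.1 == i0)%:R * ((1 - L) / 2).
exists lam; split.
- by move=> x; rewrite addr_ge0 ?mulr_ge0 ?divr_ge0 ?subr_ge0.
- rewrite sum_pair (eq_bigr (fun i => `|a i| + (i == i0)%:R * (1 - L))).
    rewrite big_split /= -/L [X in _ + X](bigD1 i0) //= eqxx mul1r big1 ?addr0 ?subrKC //.
    by move=> i /negbTE ->; rewrite mul0r.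
  by move=> i _; rewrite big_bool /lam /=; case: (a i < 0) => /=; field.
- rewrite sum_pair; apply: eq_bigr => i _.
  rewrite big_bool /= !scalerA -scalerDl; congr (_ *: _); rewrite /lam /=.
  by case: ltrP => [a_lt0|a_ge0] /=; [rewrite ltr0_norm | rewrite ger0_norm]; rewrite //; ring.
Qed.

Section MaureyCover.
Variables (R : realType) (n m : nat) (S : finType) (V : S -> 'M[R]_(n, m)).
Variables (U : set 'M[R]_(n, m)) (T eps : R).
Hypotheses (U_convex : convex_set U) (U_hull : forall u, U u -> in_hull V u).
Hypotheses (V_le : forall s, frob2 (V s) <= T ^+ 2) (eps_gt0 : 0 < eps).

Lemma maurey_proper_cover : U !=set0 ->
  exists C, is_proper_cover U eps C /\
            (size C <= #|S| ^ Num.trunc (T ^+ 2 / eps ^+ 2))%N.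
Proof.
move=> U_neq0; set K := Num.trunc (T ^+ 2 / eps ^+ 2).
have K1_gt0 : 0 < K.+1%:R :> R by rewrite ltr0n.
have eps2_gt0 : 0 < eps ^+ 2 by rewrite exprn_gt0.
have T2_lt : T ^+ 2 / K.+1%:R < eps ^+ 2.
  have /andP[_] := truncn_itv (divr_ge0 (sqr_ge0 T) (ltW eps2_gt0)).
  by rewrite -/K !ltr_pdivrMr // mulrC.
set eta := eps ^+ 2 - T ^+ 2 / K.+1%:R.
have eta_gt0 : 0 < eta by rewrite subr_gt0.
have U_bounded u : U u -> frob2 u <= T ^+ 2 by move/U_hull; exact: frob2_hull_le.
have near_proj (c : 'M[R]_(n, m)) :
    exists q, U q /\ forall x, U x -> frob2 (x - q) <= frob2 (x - c) + eta.
  by have [q Uq q_near] := approx_projection U_convex U_bounded c U_neq0 eta_gt0; exists q.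
(* The centroids need not lie in U; as the cover must be proper, each is
   moved to a nearly closest point of U, at the cost of the slack eta. *)
have [pr pr_near] := boolp.choice near_proj.
pose centroid (f : {ffun 'I_K -> S}) := K.+1%:R^-1 *: \sum_(l < K) V (f l).
exists (undup [seq pr (centroid f) | f <- enum {ffun 'I_K -> S}]); split; last first.
  by rewrite (leq_trans (size_undup _)) // size_map -cardE card_ffun card_ord.
split; [exact: undup_uniq | split].
  by move=> w; rewrite mem_undup => /mapP [f _ ->]; case: (pr_near (centroid f)).
move=> u Uu; have [f f_le] := maurey_centroid V_le K (U_hull Uu).
exists (pr (centroid f)).
  by rewrite mem_undup; apply/mapP; exists f; rewrite ?mem_enum.
apply: frob_le (ltW eps_gt0) _; apply: le_trans ((pr_near _).2 u Uu) _.
by rewrite -(subrK (T ^+ 2 / K.+1%:R) (eps ^+ 2)) addrC -/eta lerD2l.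
Qed.

End MaureyCover.

Lemma covering_number_le (R : realType) (n m : nat) (U : set 'M[R]_(n, m)) (eps : R) (M : nat) :
  (exists C, is_proper_cover U eps C /\ (size C <= M)%N) ->
  exists2 N, is_covering_number U eps N & (N <= M)%N.
Proof.
move=> [C [C_cover C_le]].
have ex_cover : exists N, `[< exists C, is_proper_cover U eps C /\ size C = N >].
  by exists (size C); apply/asboolP; exists C.
case: (ex_minnP ex_cover) => N /asboolP N_cover N_min.
exists N; last by apply: leq_trans (N_min _ _) C_le; apply/asboolP; exists C.
by split => // C' C'_cover; apply: N_min; apply/asboolP; exists C'.
Qed.

Lemma ler_ln_natr (R : realType) (N M : nat) : (N <= M)%N -> ln (N%:R : R) <= ln (M%:R : R).
Proof.
case: N => [|N] NM.
  rewrite ln0 //; case: M {NM} => [|M]; first by rewrite ln0.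
  by rewrite ln_ge0 // ler1n.
by rewrite ler_ln ?posrE ?ltr0n ?ler_nat // (leq_trans _ NM).
Qed.

Lemma entry_rnorm0 (R : realType) (m p : nat) (r : R) : 0 < r ->
  entry_rnorm r (0 : 'M[R]_(m, p)) = 0.
Proof.
move=> r0; rewrite /entry_rnorm big1 ?powR0 ?invr_eq0 ?gt_eqF // => i _.
by rewrite big1 // => j _; rewrite mxE normr0 powR0 // gt_eqF.
Qed.

Lemma entry_rnorm_ball_convex (R : realType) (m p : nat) (r b : R) : 1 <= r -> 0 <= b ->
  convex_set [set B : 'M[R]_(m, p) | entry_rnorm r B <= b].
Proof.
move=> r1 b0 B1 B2 t /set_mem /= B1b /set_mem /= B2b; apply/mem_set.
have -> : B1 <| t |> B2 = t%:num *: B1 + (1 - t%:num) *: B2 :> 'M[R]_(m, p) by [].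
have r0 : 0 < r by apply: lt_le_trans r1.
have t1 : 0 <= 1 - t%:num by rewrite subr_ge0 le1.
have sum_ge0 (B : 'M[R]_(m, p)) : 0 <= \sum_i \sum_j `|B i j| `^ r.
  by apply: sumr_ge0 => i _; apply: sumr_ge0 => j _; exact: powR_ge0.
rewrite /entry_rnorm in B1b B2b; rewrite mksetE /entry_rnorm.
rewrite (powRV_le (sum_ge0 B1) b0 r0) in B1b.
rewrite (powRV_le (sum_ge0 B2) b0 r0) in B2b.
rewrite (powRV_le (sum_ge0 _) b0 r0).
apply: (@le_trans _ _ (\sum_i \sum_j
    (t%:num * `|B1 i j| `^ r + (1 - t%:num) * `|B2 i j| `^ r))).
  apply: ler_sum => i _; apply: ler_sum => j _.
  apply: le_trans (powR_conv t r1 (normr_ge0 (B1 i j)) (normr_ge0 (B2 i j))).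
  apply: (ge0_ler_powR (ltW r0)); rewrite ?nnegrE ?normr_ge0 //.
  have -> : (t%:num *: B1 + (1 - t%:num) *: B2) i j =
            t%:num * B1 i j + (1 - t%:num) * B2 i j by rewrite !mxE.
  apply: le_trans (ler_normD _ _) _.
  by rewrite !normrM (ger0_norm (ge0 t)) (ger0_norm t1).
under eq_bigr do rewrite big_split -!mulr_sumr /=.
rewrite big_split -!mulr_sumr /=.
apply: le_trans (lerD (ler_wpM2l (ge0 t) B1b) (ler_wpM2l t1 B2b)) _.
by rewrite -mulrDl subrKC mul1r.
Qed.

Section FeatureMatrices.
Variables (R : realType) (d m p n : nat) (g : 'I_m -> 'I_p -> 'rV[R]_d -> R).
Variable X : 'M[R]_(n, d).

Definition feature_mx (ij : 'I_m * 'I_p) : 'M[R]_(n, m) :=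
  \matrix_(k, i) ((i == ij.1)%:R * g ij.1 ij.2 (row k X)).

Lemma PsiX_feature_sum B :
  PsiX g B X = \sum_(ij : 'I_m * 'I_p) B ij.1 ij.2 *: feature_mx ij.
Proof.
apply/matrixP => k i; rewrite mxE summxE sum_pair /=.
rewrite (bigD1 i) //= [X in _ = _ + X]big1 => [|i' /negbTE i'i]; last first.
  by apply: big1 => j _; rewrite !mxE eq_sym i'i mul0r mulr0.
by rewrite addr0; apply: eq_bigr => j _; rewrite !mxE eqxx mul1r.
Qed.

Lemma frob2_feature_mx ij :
  frob2 (feature_mx ij) = \sum_k g ij.1 ij.2 (row k X) ^+ 2.
Proof.
apply: eq_bigr => k _; rewrite (bigD1 ij.1) //= big1 ?addr0 => [|i /negbTE iij].
  by rewrite mxE eqxx mul1r.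
by rewrite mxE iij mul0r expr0n.
Qed.

Lemma feature_mx_eq0 ij : frob (feature_mx ij) = 0 -> feature_mx ij = 0.
Proof. by move=> f0; apply: frob2_eq0; rewrite -sqr_frob f0 expr0n. Qed.

Lemma frob_feature_mx_le (v : R) ij : 0 < v -> v <= 2 ->
  frob (feature_mx ij) <= (\sum_k `|g ij.1 ij.2 (row k X)| `^ v) `^ v^-1.
Proof.
move=> v0 v2; apply: frob_le; first exact: powR_ge0.
by rewrite frob2_feature_mx; exact: sum_sqr_le_lpnorm.
Qed.

Lemma sum_frob_feature_mx_le (v s c : R) : 0 < v -> v <= 2 -> 0 < s -> 0 < c ->
  G_norm v s g X <= c -> \sum_ij frob (feature_mx ij) `^ s <= c `^ s.
Proof.
move=> v0 v2 s0 c0; rewrite /G_norm powRV_le ?(ltW c0) //; last first.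
  by apply: sumr_ge0 => i _; apply: sumr_ge0 => j _; exact: powR_ge0.
apply: le_trans; rewrite sum_pair; apply: ler_sum => i _; apply: ler_sum => j _.
rewrite mulrC powRrM (ge0_ler_powR (ltW s0)) ?nnegrE ?powR_ge0 ?sqrtr_ge0 //.
exact: (frob_feature_mx_le (i, j)).
Qed.

Definition feature_vertex (T : R) (x : ('I_m * 'I_p) * bool) : 'M[R]_(n, m) :=
  (-1) ^+ x.2 *: ((T / frob (feature_mx x.1)) *: feature_mx x.1).

Lemma frob2_feature_vertex T x : frob2 (feature_vertex T x) <= T ^+ 2.
Proof.
rewrite !frob2Z sqrr_sign mul1r -sqr_frob.
have [->|f_neq0] := eqVneq (frob (feature_mx x.1)) 0.
  by rewrite expr0n mulr0 sqr_ge0.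
by rewrite exprMn exprVn mulfVK ?expf_neq0.
Qed.

Lemma PsiX_in_hull (v r s b c : R) (ij0 : 'I_m * 'I_p) B :
  0 < v -> v <= 2 -> 0 < r -> 0 < s -> r^-1 + s^-1 = 1 -> 0 < b -> 0 < c ->
  entry_rnorm r B <= b -> G_norm v s g X <= c ->
  in_hull (feature_vertex (b * c)) (PsiX g B X).
Proof.
move=> v0 v2 r0 s0 rs b0 c0 Bb Gc; set T := b * c.
have T_gt0 : 0 < T by rewrite mulr_gt0.
have B_r : \sum_ij `|B ij.1 ij.2| `^ r <= b `^ r.
  rewrite sum_pair -powRV_le ?(ltW b0) //.
  by apply: sumr_ge0 => i _; apply: sumr_ge0 => j _; exact: powR_ge0.
have coef_le : \sum_ij `|B ij.1 ij.2 * frob (feature_mx ij) / T| <= 1.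
  under eq_bigr do rewrite !normrM normfV (gtr0_norm T_gt0) (ger0_norm (sqrtr_ge0 _)).
  rewrite -mulr_suml ler_pdivrMr // mul1r.
  apply: (hoelder_sum r0 s0 rs b0 c0) => //.
  exact: sum_frob_feature_mx_le v0 v2 s0 c0 Gc.
suff -> : PsiX g B X = \sum_ij (B ij.1 ij.2 * frob (feature_mx ij) / T) *:
                          ((T / frob (feature_mx ij)) *: feature_mx ij).
  exact: in_hull_signed.
rewrite PsiX_feature_sum; apply: eq_bigr => ij _; rewrite scalerA.
have [f0|f_neq0] := eqVneq (frob (feature_mx ij)) 0.
  by rewrite feature_mx_eq0 // !scaler0.
by congr (_ *: _); field; rewrite f_neq0 gt_eqF.
Qed.


Lemma PsiXD B1 B2 : PsiX g (B1 + B2) X = PsiX g B1 X + PsiX g B2 X.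
Proof.
apply/matrixP => k i; rewrite !mxE -big_split.
by apply: eq_bigr => j _; rewrite mxE mulrDl.
Qed.

Lemma PsiXZ (a : R) B : PsiX g (a *: B) X = a *: PsiX g B X.
Proof.
apply/matrixP => k i; rewrite !mxE mulr_sumr.
by apply: eq_bigr => j _; rewrite mxE mulrA.
Qed.

Lemma PsiX_ball_convex (r b : R) : 1 <= r -> 0 <= b ->
  convex_set [set A : 'M[R]_(n, m) | exists B, entry_rnorm r B <= b /\ A = PsiX g B X].
Proof.
move=> r1 b0 A1 A2 t /set_mem [B1 [B1b ->]] /set_mem [B2 [B2b ->]]; apply/mem_set.
rewrite mksetE; exists (t%:num *: B1 + (1 - t%:num) *: B2); split.
  exact/set_mem/(entry_rnorm_ball_convex r1 b0 t (mem_set B1b) (mem_set B2b)).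
by rewrite PsiXD !PsiXZ.
Qed.

End FeatureMatrices.

Unset Implicit Arguments. Set Strict Implicit.

Theorem proposition2 (R : realType) (d m p n : nat)
  (hd : (0 < d)%N) (hm : (0 < m)%N) (hp : (0 < p)%N) (hn : (0 < n)%N)
  (g : 'I_m -> 'I_p -> 'rV[R]_d -> R) (X : 'M[R]_(n, d))
  (v r s b c : R)
  (hv0 : 0 < v) (hv2 : v <= 2) (hr : 0 < r) (hs : 0 < s)
  (hrs : r^-1 + s^-1 = 1) (hb : 0 < b) (hc : 0 < c)
  (hG : G_norm v s g X <= c)
  (eps : R) (heps : 0 < eps) :
  let U := [set A : 'M[R]_(n, m) |
              exists B : 'M[R]_(m, p), entry_rnorm r B <= b /\ A = PsiX g B X] in
  exists N : nat, is_covering_number U eps N /\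
    ln (N%:R : R) <= b ^+ 2 * c ^+ 2 / eps ^+ 2 * ln ((2 * m * p)%:R : R).
Proof.
move=> U; set T := b * c.
have r_ge1 : 1 <= r.
  have : r^-1 < 1 by rewrite -hrs ltrDl invr_gt0.
  by rewrite invf_lt1 // => /ltW.
have U_hull u : U u -> in_hull (feature_vertex g X T) u.
  move=> [B [Bb ->]].
  exact: (PsiX_in_hull (Ordinal hm, Ordinal hp) hv0 hv2 hr hs hrs hb hc Bb hG).
have U_neq0 : U !=set0 by exists (PsiX g 0 X), 0; rewrite entry_rnorm0 // ltW.
have := maurey_proper_cover (PsiX_ball_convex r_ge1 (ltW hb)) U_hull
  (frob2_feature_vertex g X T) heps U_neq0.
move=> /covering_number_le [N N_cov N_le]; exists N; split => //.
have card_vertices : #|{: ('I_m * 'I_p) * bool}| = (2 * m * p)%N.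
  by rewrite !card_prod card_bool !card_ord mulnC mulnA.
rewrite -exprMn -/T -card_vertices; apply: le_trans (ler_ln_natr _ N_le) _.
have /andP[K_le _] := truncn_itv (divr_ge0 (sqr_ge0 T) (ltW (exprn_gt0 2 heps))).
rewrite natrX lnXn ?ltr0n ?card_vertices ?muln_gt0 ?hm ?hp // -[ln _ *+ _]mulr_natl.
by apply: ler_wpM2r K_le; rewrite ln_ge0 // ler1n !muln_gt0 hm hp.
Qed.
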